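(* Let $G$ be a graph. Then for every induced subgraph $H$ of $G$, \[\chi(G) \leq \frac{1}{2} \left(\omega(G) + \frac{\Delta(G) + 1 + |G|}{2} \right) + \frac{3\chi(H) - |H|}{4}.\]
   Context: All graphs are finite and simple with non-empty vertex set; induced subgraphs are likewise taken with non-empty vertex set. $|G|$ denotes the number of vertices of $G$, $\chi(G)$ the chromatic number, $\omega(G)$ the clique number and $\Delta(G)$ the maximum degree. *)

From mathcomp Require Import all_boot all_order all_algebra.
Set Implicit Arguments. Unset Strict Implicit. Unset Printing Implicit Defensive.

(* A finite simple graph: vertex type T : finType, adjacency e : rel T,
   assumed symmetric and irreflexive (hypotheses of the theorem).
   An induced subgraph is given by a nonempty vertex set S : {set T}. *)

Definition colorable (T : finType) (e : rel T) (S : {set T}) (k : nat) : bool :=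
  [exists f : {ffun T -> 'I_k},
     [forall x in S, forall y in S, e x y ==> (f x != f y)]].

(* Chromatic number of the subgraph induced on S: least k with a proper
   k-colouring (#|T| colours always suffice, so the bound #|T| is harmless). *)
Definition chi (T : finType) (e : rel T) (S : {set T}) : nat :=
  \big[minn/#|T|]_(k < #|T|.+1 | colorable e S k) k.

Definition is_clique (T : finType) (e : rel T) (A : {set T}) : bool :=
  [forall x in A, forall y in A, (x != y) ==> e x y].

Definition omega (T : finType) (e : rel T) : nat :=
  \max_(A : {set T} | is_clique e A) #|A|.

Definition Delta (T : finType) (e : rel T) : nat :=
  \max_(x : T) #|[set y | e x y]|.

From mathcomp Require Import all_boot all_order all_algebra.
From mathcomp Require Import zify lra.

Set Implicit Arguments. Unset Strict Implicit. Unset Printing Implicit Defensive.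

(* Write n, w and D for the order, clique number and maximum degree.  The
   heart is the bound 4 chi <= 2 w + D + 1 + n, by induction on n.  A
   non-critical vertex can be deleted.  An independent set of size 3 extends to
   a maximal independent set J; deleting J lowers chi by at most one, D by at
   least one and n by at least three.  A join of two graphs splits additively.
   What remains is a vertex-critical graph with no independent set of size 3
   whose complement is connected.  Colourings of it are matchings of the
   complement, criticality says that every vertex is missed by a maximum
   matching of the complement, and Gallai's lemma then makes the complement
   factor-critical: 2 chi <= n + 1.  Since the non-neighbours of a vertex form a
   clique, n <= 1 + D + w, which closes the induction.
   The theorem follows by induction on G: delete a maximal independent set of G
   containing a colour class of an optimal colouring of H. *)

(** * Alternating walks of two involutions *)

Section AlternatingWalk.
Variables (T : finType) (p q : T -> T).
Hypotheses (pK : involutive p) (qK : involutive q).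

Definition alt_rel := [rel a b | (b == p a) || (b == q a)].

Lemma alt_rel_sym : symmetric alt_rel.
Proof.
move=> a b; apply/orP/orP => -[/eqP ->|/eqP ->];
  rewrite ?pK ?qK eqxx ?orbT; by [left|right].
Qed.

Variable u : T.
Hypotheses (pu : p u = u) (qu : q u != u).

Fixpoint alt_walk i := if i is i'.+1 then (if odd i' then p else q) (alt_walk i') else u.

Lemma alt_walk_back i : (if odd i then p else q) (alt_walk i.+1) = alt_walk i.
Proof. by rewrite /=; case: (odd i). Qed.

Lemma alt_walk_uniq b : (forall i, i < b -> alt_walk i.+1 != alt_walk i) ->
  forall a, a < b -> alt_walk a != alt_walk b.
Proof.
elim: b => [//|b IH] H a ab; apply/eqP => hab.
have Hb i : i < b -> alt_walk i.+1 != alt_walk i by move=> ib; apply: H; lia.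
have wb : alt_walk b = (if odd b then p else q) (alt_walk a) by rewrite hab alt_walk_back.
case: a ab hab wb => [|a'] ab hab wb.
  rewrite /= in wb; case ob: (odd b) wb => wb.
    by move: (H b (ltnSn b)); rewrite -hab wb pu eqxx.
  case: b ob IH H Hb ab hab wb => [|b] ob IH H Hb ab hab wb.
    by move: (H 0 isT); rewrite -hab eqxx.
  case: b ob IH H Hb ab hab wb => [//|b] ob IH H Hb ab hab wb.
  by have := IH Hb 1 isT; rewrite wb /= eqxx.
case oa: (odd a' == odd b).
  have : alt_walk a' = alt_walk b by rewrite -(alt_walk_back a') (eqP oa) hab alt_walk_back.
  by move/eqP; rewrite (negbTE (IH Hb a' _)) //; lia.
have oab : odd a'.+1 = odd b by move: oa; rewrite /=; case: (odd a'); case: (odd b).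
have wa : alt_walk a'.+2 = alt_walk b by rewrite wb -oab.
case: (ltngtP a'.+1 b) => h.
- case: (ltngtP a'.+2 b) => h2.
  + by move/eqP: wa; rewrite (negbTE (IH Hb _ h2)).
  + lia.
  + by move: oab; rewrite -h2 /=; case: (odd a').
- lia.
- by move: (H b (ltnSn b)); rewrite -hab h eqxx.
Qed.

Lemma alt_walk_stalls : exists j, alt_walk j.+1 == alt_walk j.
Proof.
case: (boolP [exists j : 'I_#|T|, alt_walk j.+1 == alt_walk j]) => [/existsP [j hj]|/existsPn H].
  by exists j.
have H' i : i < #|T| -> alt_walk i.+1 != alt_walk i by move=> hi; exact: (H (Ordinal hi)).
suff inj : injective (fun i : 'I_#|T|.+1 => alt_walk i).
  by have := leq_card _ inj; rewrite card_ord ltnn.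
move=> a b hab; apply/val_inj/eqP; case: (ltngtP a b) => // h.
- have Hb i : i < b -> alt_walk i.+1 != alt_walk i by move=> hi; apply: H'; have := ltn_ord b; lia.
  by have := alt_walk_uniq Hb h; rewrite hab eqxx.
- have Ha i : i < a -> alt_walk i.+1 != alt_walk i by move=> hi; apply: H'; have := ltn_ord a; lia.
  by have := alt_walk_uniq Ha h; rewrite hab eqxx.
Qed.

(* The component of [u] is the path traced by [alt_walk] up to its first stall,
   so it contains at most one fixed point of [p] or [q] besides [u]. *)
Lemma alt_component_ends : exists z, forall x, connect alt_rel u x ->
  (p x == x) || (q x == x) -> x = u \/ x = z.
Proof.
pose j := ex_minn alt_walk_stalls.
have jr : alt_walk j.+1 == alt_walk j by rewrite /j; case: ex_minnP.
have jmin i : i < j -> alt_walk i.+1 != alt_walk i.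
  move=> ij; apply/negP => h; have := ij; rewrite /j; case: ex_minnP => m _ /(_ i h); lia.
pose S x := [exists i : 'I_j.+1, x == alt_walk i].
have Sw i : i <= j -> S (alt_walk i).
  by move=> ij; apply/existsP; exists (Ordinal (ij : i < j.+1)).
have clos a : S a -> S (p a) && S (q a).
  case/existsP => [[i /= ij] /eqP ->].
  have h1 : S ((if odd i then p else q) (alt_walk i)).
    rewrite -/(alt_walk i.+1); case: (ltngtP i j) => h; [exact: Sw | lia |].
    by rewrite h (eqP jr); exact: Sw.
  have h2 : S ((if odd i then q else p) (alt_walk i)).
    case: i ij h1 => [|i] ij h1; first by rewrite /= pu; exact: (Sw 0 (leq0n j)).
    have -> : (if odd i.+1 then q else p) (alt_walk i.+1) = alt_walk i.
      by rewrite -(alt_walk_back i) /=; case: (odd i).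
    apply: Sw; lia.
  by case: (odd i) h1 h2 => /= -> ->.
have Sc x : connect alt_rel u x -> S x.
  case/connectP => s ps ->; have : S u by exact: (Sw 0 isT).
  elim: s u ps => [//|b s IHs] a /= /andP [/orP [/eqP ->|/eqP ->] ps] Sa; apply: IHs => //;
    by case/andP: (clos a Sa).
exists (alt_walk j) => x /Sc /existsP [[i /= ij] /eqP ->] fx.
case: i ij fx => [|i] ij fx; first by left.
case: (ltngtP i.+1 j) => h; [|lia|by right; rewrite h].
have n1 : (if odd i.+1 then p else q) (alt_walk i.+1) != alt_walk i.+1 by exact: jmin h.
have n2 : (if odd i then p else q) (alt_walk i.+1) != alt_walk i.+1.
  by rewrite alt_walk_back eq_sym; apply: jmin; lia.
move: fx n1 n2; rewrite /=; case: (odd i) => /= /orP [/eqP ->|/eqP ->]; rewrite ?eqxx //.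
Qed.

End AlternatingWalk.

(** * Colourings, cliques and degrees of induced subgraphs *)

Lemma bigmin_leq_cond (I : eqType) (r : seq I) (P : pred I) (F : I -> nat) d j :
  j \in r -> P j -> \big[minn/d]_(i <- r | P i) F i <= F j.
Proof.
elim: r => [//|a r IH]; rewrite inE big_cons => /orP [/eqP <-|jr] Pj.
  by rewrite Pj geq_minl.
case: (P a); last exact: IH.
by rewrite geq_min IH ?orbT.
Qed.

Lemma bigmin_leq_idx (I : Type) (r : seq I) (P : pred I) (F : I -> nat) d :
  \big[minn/d]_(i <- r | P i) F i <= d.
Proof.
elim: r => [|a r IH]; first by rewrite big_nil.
by rewrite big_cons; case: (P a) => //; exact: leq_trans (geq_minr _ _) IH.
Qed.

Lemma unbump_lt h i k : h < k -> i < k -> i != h -> unbump h i < k.-1.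
Proof. by rewrite /unbump; case: ltnP => /=; lia. Qed.

Section Graph.
Variables (T : finType) (e : rel T).
Hypotheses (e_sym : symmetric e) (e_irr : irreflexive e).

Lemma chi_colorable (S : {set T}) : colorable e S (chi e S).
Proof.
rewrite /chi; apply: (big_ind (colorable e S)) => [|a b ca cb|//].
- apply/existsP; exists [ffun x => enum_rank x]; apply/forall_inP => x _.
  apply/forall_inP => y _; apply/implyP => exy; rewrite !ffunE.
  by apply: contraL exy => /eqP /enum_rank_inj ->; rewrite e_irr.
- by rewrite /minn; case: ifP.
Qed.

Lemma chi_min (S : {set T}) k : colorable e S k -> chi e S <= k.
Proof.
move=> ck; case: (leqP k #|T|) => hk; last exact: leq_trans (bigmin_leq_idx _ _ _ _) (ltnW hk).
exact: (bigmin_leq_cond (P := fun i : 'I_#|T|.+1 => colorable e S i) (fun i => val i) _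
  (mem_index_enum (Ordinal (hk : k < #|T|.+1))) ck).
Qed.

(* [chi e set0] is [1] as soon as [T] is inhabited, hence the special case. *)
Definition chrom (V : {set T}) := if V == set0 then 0 else chi e V.

Definition ncolorable (V : {set T}) (k : nat) : Prop :=
  exists f : T -> nat, (forall x, x \in V -> f x < k) /\
     (forall x y, x \in V -> y \in V -> e x y -> f x <> f y).

Lemma chrom_min (V : {set T}) k : ncolorable V k -> chrom V <= k.
Proof.
case=> f [fk fp]; rewrite /chrom; case: eqP => // /eqP /set0Pn [x0 x0V].
have kp : 0 < k by apply: leq_ltn_trans (fk _ x0V).
apply: chi_min; apply/existsP; exists [ffun x => insubd (Ordinal kp) (f x)].
apply/forall_inP => x xV; apply/forall_inP => y yV; apply/implyP => exy.
by rewrite !ffunE; apply/negP => /eqP /(congr1 val); rewrite !val_insubd !fk //; exact: fp.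
Qed.

Lemma chrom_ncolorable (V : {set T}) : ncolorable V (chrom V).
Proof.
rewrite /chrom; case: eqP => [->|_]; first by exists (fun _ => 0); split => x; rewrite inE.
have /existsP [g /forallP gp] := chi_colorable V.
exists (fun x => val (g x)); split => [x _|x y xV yV exy /val_inj gxy]; first exact: ltn_ord.
by have /forallP /(_ y) := implyP (gp x) xV; rewrite yV exy gxy eqxx.
Qed.

Lemma chromS (V W : {set T}) : V \subset W -> chrom V <= chrom W.
Proof.
move=> sVW; apply: chrom_min; have [f [fk fp]] := chrom_ncolorable W.
by exists f; split => [x xV|x y xV yV]; [apply: fk|apply: fp]; exact: (subsetP sVW).
Qed.

Lemma chrom_setID (V A : {set T}) : chrom V <= chrom (V :&: A) + chrom (V :\: A).
Proof.
apply: chrom_min; have [f [fk fp]] := chrom_ncolorable (V :&: A).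
have [g [gk gp]] := chrom_ncolorable (V :\: A); set k := chrom (V :&: A).
exists (fun x => if x \in A then f x else k + g x); split.
  move=> x xV; case: ifP => xA.
    by apply: leq_trans (fk x _) (leq_addr _ _); rewrite inE xV xA.
  by rewrite ltn_add2l; apply: gk; rewrite inE xA xV.
move=> x y xV yV exy; case: ifP => xA; case: ifP => yA.
- by apply: fp => //; rewrite inE ?xV ?xA ?yV ?yA.
- by move=> h; have := fk x; rewrite inE xV xA h ltnNge leq_addr => /(_ isT).
- by move=> h; have := fk y; rewrite inE yV yA -h ltnNge leq_addr => /(_ isT).
- by move=> /addnI; apply: gp => //; rewrite inE ?xV ?xA ?yV ?yA.
Qed.

Definition indep (I : {set T}) := [forall x in I, forall y in I, ~~ e x y].

Lemma indepP I x y : indep I -> x \in I -> y \in I -> ~~ e x y.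
Proof. by move=> /forall_inP /(_ x) hI /hI /forall_inP; apply. Qed.

Lemma chrom_setD_indep (V I : {set T}) : indep I -> chrom V <= (chrom (V :\: I)).+1.
Proof.
move=> iI; apply: chrom_min; have [f [fk fp]] := chrom_ncolorable (V :\: I).
set k := chrom (V :\: I).
exists (fun x => if x \in I then k else f x); split.
  by move=> x xV; case: ifP => xI //; rewrite ltnS ltnW // fk // inE xI.
move=> x y xV yV exy; case: ifP => xI; case: ifP => yI.
- by have := indepP iI xI yI; rewrite exy.
- by move=> h; have := fk y; rewrite inE yI yV -h ltnn => /(_ isT).
- by move=> h; have := fk x; rewrite inE xI xV h ltnn => /(_ isT).
- by apply: fp => //; rewrite inE ?xI ?yI.
Qed.

Lemma maximal_indep_ext (V I : {set T}) : indep I -> I \subset V ->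
  exists J : {set T}, [/\ I \subset J, J \subset V, indep J &
      forall x, x \in V :\: J -> exists2 y, y \in J & e x y].
Proof.
move=> iI sIV.
pose P := fun J : {set T} => [&& I \subset J, J \subset V & indep J].
have P0 : P I by rewrite /P subxx sIV iI.
case: (arg_maxnP (fun J : {set T} => #|J|) P0) => J /and3P [sIJ sJV iJ] Jmax.
exists J; split => // x /setDP [xV xJ].
case: (boolP [exists y in J, e x y]) => [/existsP [y /andP [yJ exy]]|/existsPn nex].
  by exists y.
suff : #|x |: J| <= #|J| by rewrite cardsU1 xJ ltnn.
apply: Jmax; rewrite /P (subset_trans sIJ (subsetUr _ _)) subUset sub1set xV sJV /=.
apply/forallP => a; apply/implyP; rewrite !inE => /orP [/eqP ->|aJ]; apply/forallP => b;
  apply/implyP; rewrite !inE => /orP [/eqP ->|bJ].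
- by rewrite e_irr.
- by have := nex b; rewrite bJ.
- by have := nex a; rewrite aJ e_sym.
- exact: indepP iJ aJ bJ.
Qed.

Definition clique_num (V : {set T}) :=
  \max_(A : {set T} | (A \subset V) && is_clique e A) #|A|.

Lemma cliqueP (C : {set T}) x y : is_clique e C -> x \in C -> y \in C -> x != y -> e x y.
Proof. by move=> /forall_inP /(_ x) h /h /forall_inP h' /h' /implyP. Qed.

Lemma leq_clique_num (V A : {set T}) : A \subset V -> is_clique e A -> #|A| <= clique_num V.
Proof. by move=> sA cA; apply: leq_bigmax_cond; rewrite sA. Qed.

Lemma clique_num_attained (V : {set T}) :
  exists A : {set T}, [/\ A \subset V, is_clique e A & #|A| = clique_num V].
Proof.
have P0 : (set0 \subset V) && is_clique e set0.
  by rewrite sub0set; apply/forallP => x; rewrite inE.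
rewrite /clique_num (bigmax_eq_arg set0 P0).
by case: arg_maxnP => // A /andP [sA cA] _; exists A.
Qed.

Lemma clique_numS (V W : {set T}) : V \subset W -> clique_num V <= clique_num W.
Proof.
move=> sVW; have [A [sA cA <-]] := clique_num_attained V.
by apply: leq_clique_num cA; apply: subset_trans sVW.
Qed.

Lemma clique_num_gt0 (V : {set T}) x : x \in V -> 0 < clique_num V.
Proof.
move=> xV; rewrite -(cards1 x); apply: leq_clique_num; first by rewrite sub1set.
by apply/forallP => a; apply/implyP; rewrite inE => /eqP ->; apply/forallP => b;
  apply/implyP; rewrite inE => /eqP ->; rewrite eqxx.
Qed.

Lemma clique_num_edge (V : {set T}) x y : x \in V -> y \in V -> e x y -> 1 < clique_num V.
Proof.
move=> xV yV exy; have nxy : x != y by apply: contraTneq exy => ->; rewrite e_irr.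
have -> : 2 = #|[set x; y]| by rewrite cards2 nxy.
apply: leq_clique_num; first by rewrite subUset !sub1set xV yV.
apply/forall_inP => a ha; apply/forall_inP => b hb.
apply/implyP => nab; move: ha hb nab; rewrite !inE => /orP [] /eqP -> /orP [] /eqP ->;
  by rewrite ?eqxx // e_sym.
Qed.

Definition complete_to (A B : {set T}) := [forall x in A, forall y in B, e x y].

Lemma complete_toP A B x y : complete_to A B -> x \in A -> y \in B -> e x y.
Proof. by move=> /forall_inP /(_ x) h /h /forall_inP; apply. Qed.

Lemma clique_num_join (V A : {set T}) : A \subset V -> complete_to A (V :\: A) ->
  clique_num A + clique_num (V :\: A) <= clique_num V.
Proof.
move=> sAV join; have [CA [sCA cCA <-]] := clique_num_attained A.
have [CB [sCB cCB <-]] := clique_num_attained (V :\: A).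
have disj : CA :&: CB = set0.
  apply/setP => z; rewrite !inE.
  by apply/andP => -[/(subsetP sCA) zA /(subsetP sCB)]; rewrite inE zA.
rewrite -cardsUI disj cards0 addn0; apply: leq_clique_num.
  by rewrite subUset (subset_trans sCA sAV) (subset_trans sCB) // subsetDl.
apply/forallP => x; apply/implyP; rewrite inE => /orP [xA|xB]; apply/forallP => y; apply/implyP;
  rewrite inE => /orP [yA|yB]; apply/implyP => nxy.
- exact: cliqueP cCA xA yA nxy.
- exact: complete_toP join (subsetP sCA _ xA) (subsetP sCB _ yB).
- by rewrite e_sym; exact: complete_toP join (subsetP sCA _ yA) (subsetP sCB _ xB).
- exact: cliqueP cCB xB yB nxy.
Qed.

Definition max_deg (V : {set T}) := \max_(x in V) #|[set y in V | e x y]|.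

Lemma leq_max_deg (V : {set T}) x : x \in V -> #|[set y in V | e x y]| <= max_deg V.
Proof. by move=> xV; apply: leq_bigmax_cond. Qed.

Lemma max_deg_attained (V : {set T}) : V != set0 ->
  exists2 x, x \in V & #|[set y in V | e x y]| = max_deg V.
Proof.
case/set0Pn => x0 x0V; rewrite /max_deg (bigmax_eq_arg x0 x0V).
by case: arg_maxnP => // x xV _; exists x.
Qed.

Lemma max_degS (V W : {set T}) : V \subset W -> max_deg V <= max_deg W.
Proof.
move=> sVW; case: (V =P set0) => [->|/eqP nV].
  by rewrite /max_deg big_pred0 // => x; rewrite inE.
have [x xV <-] := max_deg_attained nV; apply: leq_trans (leq_max_deg (subsetP sVW _ xV)).
by apply: subset_leq_card; apply/subsetP => y; rewrite !inE => /andP [/(subsetP sVW) -> ->].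
Qed.

Lemma max_deg_lt_card (V : {set T}) : V != set0 -> max_deg V < #|V|.
Proof.
move=> nV; have [x xV <-] := max_deg_attained nV; apply: proper_card; apply/properP; split.
  by apply/subsetP => z; rewrite inE => /andP [].
by exists x; rewrite // inE e_irr andbF.
Qed.

Lemma max_deg_setD_dominating (V I : {set T}) : I \subset V ->
  (forall x, x \in V :\: I -> exists2 y, y \in I & e x y) -> V :\: I != set0 ->
  max_deg (V :\: I) < max_deg V.
Proof.
move=> sIV dom ne; have [x xW <-] := max_deg_attained ne.
have xV : x \in V by move: xW; rewrite inE => /andP [].
apply: leq_trans (leq_max_deg xV); apply: proper_card; apply/properP; split.
  by apply/subsetP => z; rewrite !inE => /andP [/andP [_ ->] ->].
have [y yI exy] := dom x xW; exists y; first by rewrite inE (subsetP sIV) // exy.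
by rewrite !inE yI.
Qed.

Lemma max_deg_join (V A : {set T}) : A \subset V -> A != set0 ->
  complete_to A (V :\: A) -> max_deg A + #|V :\: A| <= max_deg V.
Proof.
move=> sAV nA join; have [x xA <-] := max_deg_attained nA.
apply: leq_trans (leq_max_deg (subsetP sAV _ xA)).
have disj : [set y in A | e x y] :&: (V :\: A) = set0.
  by apply/setP => z; rewrite !inE; case: (z \in A); rewrite ?andbF.
rewrite -cardsUI disj cards0 addn0; apply: subset_leq_card.
apply/subsetP => z; rewrite !inE => /orP [/andP [zA ->]|/andP [zA zV]].
  by rewrite (subsetP sAV).
by rewrite zV (complete_toP join xA) // inE zA.
Qed.

(** * Matchings of the complement *)

Definition nonadj x y := (x != y) && ~~ e x y.

Lemma nonadj_sym : symmetric nonadj.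
Proof. by move=> x y; rewrite /nonadj eq_sym e_sym. Qed.

(* A matching of the complement of the graph induced on [V], encoded as an
   involution of [T] that fixes every vertex outside [V] and swaps each
   matched vertex with a non-neighbour. *)
Definition comatching (V : {set T}) (p : {ffun T -> T}) :=
  [&& [forall x, p (p x) == x], [forall x, (x \notin V) ==> (p x == x)] &
      [forall x, (p x != x) ==> nonadj x (p x)]].

Definition defect (V : {set T}) (p : {ffun T -> T}) := #|[set x in V | p x == x]|.

Section Comatching.
Variables (V : {set T}) (p : {ffun T -> T}).
Hypothesis mp : comatching V p.

Lemma comatchingK : involutive p.
Proof. by case/and3P: mp => /forallP h _ _ x; apply/eqP. Qed.

Lemma comatching_out x : x \notin V -> p x = x.
Proof. by case/and3P: mp => _ /forallP /(_ x) /implyP h _ /h /eqP. Qed.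

Lemma comatching_nonadj x : p x != x -> nonadj x (p x).
Proof. by case/and3P: mp => _ _ /forallP /(_ x) /implyP. Qed.

Lemma comatching_mem x : x \in V -> p x \in V.
Proof.
move=> xV; apply: contraT => pxV; have := comatching_out pxV; rewrite comatchingK => xE.
by rewrite -xE xV in pxV.
Qed.

Lemma comatchingS (W : {set T}) : V \subset W -> comatching W p.
Proof.
move=> sVW; apply/and3P; split; apply/forallP => x.
- by rewrite comatchingK.
- by apply/implyP => xW; rewrite comatching_out //; apply: contra xW; apply: (subsetP sVW).
- exact/implyP/comatching_nonadj.
Qed.

Lemma comatching_transversal : exists R : {set T}, [/\ R \subset V,
   2 * #|R| = #|V| + defect V p, (forall x, x \in V -> x \in R \/ p x \in R) &
   (forall x, x \in R -> p x \in R -> p x = x)].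
Proof.
have p_inj : injective p := can_inj comatchingK.
pose rk (x : T) := val (enum_rank x).
have rk_inj : injective rk by move=> x y /val_inj /enum_rank_inj.
pose R := [set x in V | rk x <= rk (p x)].
pose F := [set x in V | p x == x].
have FR : F \subset R.
  by apply/subsetP => x; rewrite !inE => /andP [-> /eqP ->]; rewrite leqnn.
have sRV : R \subset V by apply/subsetP => x; rewrite inE => /andP [].
have pR : p @: (V :\: R) = R :\: F.
  apply/setP => y; apply/imsetP/idP => [[x /setDP [xV xR] ->]|].
    have lt : rk (p x) < rk x by move: xR; rewrite inE xV ltnNge.
    rewrite !inE comatching_mem // comatchingK (ltnW lt) !andbT /=.
    by rewrite eq_sym; apply: contraTneq lt => ->; rewrite ltnn.
  move=> /setDP []; rewrite !inE => /andP [yV le]; rewrite yV /= => py.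
  exists (p y); last by rewrite comatchingK.
  rewrite !inE comatching_mem // comatchingK andbT /= -ltnNge ltn_neqAle le andbT.
  by apply: contra py => /eqP /rk_inj <-.
have cV : #|V| = #|R| + #|V :\: R| by rewrite -(cardsID R V) (setIidPr sRV).
have cF : #|R :\: F| = #|R| - #|F| by rewrite cardsD (setIidPr FR).
have := subset_leq_card FR; have := card_imset (V :\: R) p_inj; rewrite pR.
exists R; split => //.
- rewrite /defect -/F; lia.
- move=> x xV; case: (leqP (rk x) (rk (p x))) => h; first by left; rewrite inE xV h.
  by right; rewrite inE comatching_mem //= comatchingK ltnW.
- move=> x; rewrite !inE comatchingK => /andP [_ h1] /andP [_ h2].
  by apply: rk_inj; apply/eqP; rewrite eqn_leq h1 h2.
Qed.

(* Two matched non-neighbours can share a colour. *)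
Lemma chrom_comatching : 2 * chrom V <= #|V| + defect V p.
Proof.
have [R [sRV cR cov uni]] := comatching_transversal.
pose rep (x : T) := if x \in R then x else p x.
have repR x : x \in V -> rep x \in R.
  move=> xV; rewrite /rep; case: ifP => // /negbT xR.
  by case: (cov x xV) => //; rewrite (negbTE xR).
have repE x y : rep x = rep y -> y = x \/ y = p x.
  rewrite /rep; case: ifP => _; case: ifP => _.
  - by move=> ->; left.
  - by move=> ->; rewrite comatchingK; right.
  - by move=> <-; right.
  - by move/(can_inj comatchingK) => ->; left.
rewrite -cR leq_mul2l /=.
apply: chrom_min; exists (fun x => index (rep x) (enum R)); split.
  by move=> x xV; rewrite cardE index_mem mem_enum repR.
move=> x y xV yV exy hidx.
have hr : rep x = rep y.
  have hx : rep x \in enum R by rewrite mem_enum repR.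
  by rewrite -(nth_index x hx) hidx nth_index // mem_enum repR.
case: (repE x y hr) => hy; first by rewrite hy e_irr in exy.
have pxx : p x != x by apply: contraTneq exy => h; rewrite hy h e_irr.
by move: (comatching_nonadj pxx); rewrite /nonadj -hy exy andbF.
Qed.

End Comatching.

Lemma comatching_id (V : {set T}) : comatching V [ffun x => x].
Proof. by apply/and3P; split; apply/forallP => x; rewrite ?ffunE ?eqxx ?implybT. Qed.

Definition min_defect (V : {set T}) :=
  defect V [arg min_(p < [ffun x => x] | comatching V p) defect V p].

Lemma min_defect_le V p : comatching V p -> min_defect V <= defect V p.
Proof. by move=> mp; rewrite /min_defect; case: arg_minnP => [|q _ ->//]; exact: comatching_id. Qed.

Lemma min_defect_attained V : exists2 p, comatching V p & defect V p = min_defect V.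
Proof.
by rewrite /min_defect; case: arg_minnP => [|p mp _]; [exact: comatching_id | exists p].
Qed.

(* Otherwise matching [a] with [b] would lower the defect. *)
Lemma min_comatching_maximal V p a b : comatching V p -> defect V p = min_defect V ->
  a \in V -> b \in V -> nonadj a b -> p a = a -> p b = b -> False.
Proof.
move=> mp dp aV bV fab pa pb.
have nab : a != b by case/andP: fab.
have nba : b != a by rewrite eq_sym.
pose p' := [ffun x => if x == a then b else if x == b then a else p x].
have pK := comatchingK mp.
have pxa x : x != a -> p x != a by apply: contra => /eqP h; rewrite -(pK x) h pa.
have pxb x : x != b -> p x != b by apply: contra => /eqP h; rewrite -(pK x) h pb.
have p'a : p' a = b by rewrite ffunE eqxx.
have p'b : p' b = a by rewrite ffunE (negbTE nba) eqxx.
have p'o x : x != a -> x != b -> p' x = p x by move=> xa xb; rewrite ffunE (negbTE xa) (negbTE xb).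
have mp' : comatching V p'.
  apply/and3P; split; apply/forallP => x.
  - case: (x =P a) => [->|/eqP xa]; first by rewrite p'a p'b.
    case: (x =P b) => [->|/eqP xb]; first by rewrite p'b p'a.
    by rewrite p'o // p'o ?pK ?pxa ?pxb.
  - apply/implyP => xV; case: (x =P a) => [xa|/eqP xa]; first by rewrite xa aV in xV.
    case: (x =P b) => [xb|/eqP xb]; first by rewrite xb bV in xV.
    by rewrite p'o // (comatching_out mp).
  - apply/implyP; case: (x =P a) => [-> _|/eqP xa]; first by rewrite p'a.
    case: (x =P b) => [-> _|/eqP xb]; first by rewrite p'b nonadj_sym.
    by rewrite p'o //; exact: (comatching_nonadj mp).
suff : defect V p' < defect V p by rewrite dp ltnNge min_defect_le.
apply: proper_card; apply/properP; split.
  apply/subsetP => x; rewrite !inE => /andP [xV].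
  case: (x =P a) => [->|/eqP xa]; first by rewrite p'a (negbTE nba).
  case: (x =P b) => [->|/eqP xb]; first by rewrite p'b (negbTE nab).
  by rewrite p'o // => ->; rewrite xV.
by exists a; rewrite !inE ?aV ?pa ?eqxx // p'a (negbTE nba) andbF.
Qed.

Definition splice (O : {set T}) (p q : {ffun T -> T}) :=
  [ffun y => if y \in O then p y else q y].

Lemma comatching_splice (V O : {set T}) p q : comatching V p -> comatching V q ->
  (forall y, (p y \in O) = (y \in O)) -> (forall y, (q y \in O) = (y \in O)) ->
  comatching V (splice O p q).
Proof.
move=> mp mq pO qO; apply/and3P; split; apply/forallP => y; rewrite !ffunE.
- case: (boolP (y \in O)) => yO; first by rewrite pO yO (comatchingK mp).
  by rewrite qO (negbTE yO) (comatchingK mq).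
- by apply/implyP => yV; case: ifP => _; rewrite ?(comatching_out mp) ?(comatching_out mq).
- by apply/implyP; case: ifP => _; [exact: (comatching_nonadj mp) | exact: (comatching_nonadj mq)].
Qed.

Lemma defect_splice (V O : {set T}) p q :
  defect V (splice O p q) + defect V (splice O q p) = defect V p + defect V q.
Proof.
rewrite /defect -(cardsID O [set y in V | p y == y]) -(cardsID O [set y in V | q y == y]).
rewrite -(cardsID O [set y in V | splice O p q y == y]).
rewrite -(cardsID O [set y in V | splice O q p y == y]).
have EI f g : [set y in V | splice O f g y == y] :&: O = [set y in V | f y == y] :&: O.
  by apply/setP => y; rewrite !inE ffunE; case: (y \in O); rewrite ?andbF.
have ED f g : [set y in V | splice O f g y == y] :\: O = [set y in V | g y == y] :\: O.
  by apply/setP => y; rewrite !inE ffunE; case: (y \in O).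
by rewrite !EI !ED; lia.
Qed.

Lemma min_comatching_splice (V O : {set T}) p q :
  comatching V p -> defect V p = min_defect V ->
  comatching V q -> defect V q = min_defect V ->
  (forall y, (p y \in O) = (y \in O)) -> (forall y, (q y \in O) = (y \in O)) ->
  comatching V (splice O p q) /\ defect V (splice O p q) = min_defect V.
Proof.
move=> mp dp mq dq pO qO; have mpq := comatching_splice mp mq pO qO.
have := min_defect_le mpq; have := min_defect_le (comatching_splice mq mp qO pO).
by have := defect_splice V O p q; split => //; lia.
Qed.

(** * Gallai's lemma *)

(* Otherwise splicing [p] into [q] on the [alt_rel p q]-component of [x] gives a
   minimum comatching that still fixes [t] and agrees with [p] more often. *)
Lemma min_comatching_alt_connect (V : {set T}) p q t x :
  comatching V p -> defect V p = min_defect V ->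
  comatching V q -> defect V q = min_defect V -> q t = t ->
  (forall q', comatching V q' -> defect V q' = min_defect V -> q' t = t ->
     #|[set y | p y == q' y]| <= #|[set y | p y == q y]|) ->
  p x = x -> q x != x -> connect (alt_rel p q) x t.
Proof.
move=> mp dp mq dq qt qmax px qx; apply: contraT => nxt.
have rsym := alt_rel_sym (comatchingK mp) (comatchingK mq).
pose O := [set y | connect (alt_rel p q) x y].
have Ostep y z : alt_rel p q y z -> (z \in O) = (y \in O).
  move=> yz; rewrite !inE; apply/idP/idP => h; apply: connect_trans h _; apply: connect1 => //.
  by rewrite rsym.
have pO y : (p y \in O) = (y \in O) by apply: Ostep; rewrite /= eqxx.
have qO y : (q y \in O) = (y \in O) by apply: Ostep; rewrite /= eqxx orbT.
have [mq' dq'] := min_comatching_splice mp dp mq dq pO qO.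
have tO : t \notin O by rewrite inE.
suff : #|[set y | p y == q y]| < #|[set y | p y == splice O p q y]|.
  by rewrite ltnNge qmax // ffunE (negbTE tO).
apply: proper_card; apply/properP; split.
  by apply/subsetP => y; rewrite !inE ffunE; case: ifP => // _ /eqP ->.
have xO : x \in O by rewrite inE connect0.
by exists x; rewrite !inE ?ffunE ?xO ?eqxx // px eq_sym.
Qed.

Definition compl_rel (V : {set T}) := [rel x y | [&& x \in V, y \in V & nonadj x y]].

Lemma compl_path_last (V : {set T}) a s : a \in V -> path (compl_rel V) a s -> last a s \in V.
Proof. by elim: s a => [//|b s IH] a aV /= /andP [/and3P [_ bV _] ps]; exact: IH. Qed.

Section Gallai.
Variable V : {set T}.
Hypothesis missed : forall v, v \in V ->
  exists2 p, comatching V p & defect V p = min_defect V /\ p v = v.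

Lemma min_comatching_unmatched_path s p u v :
  comatching V p -> defect V p = min_defect V -> u \in V -> p u = u -> p v = v -> u != v ->
  path (compl_rel V) u s -> last u s = v -> False.
Proof.
elim: s p u => [|t s IH] p u mp dp uV pu pv uv /=; first by move=> _ uE; rewrite uE eqxx in uv.
move=> /andP [/and3P [_ tV nut] ps] ls.
case: (boolP (p t == t)) => [/eqP pt|pt].
  exact: min_comatching_maximal mp dp uV tV nut pu pt.
have tv : t != v by apply: contraNneq pt => ->; rewrite pv.
have [q0 mq0 [dq0 q0t]] := missed tV.
pose P := fun q : {ffun T -> T} => [&& comatching V q, defect V q == min_defect V & q t == t].
have Pq0 : P q0 by rewrite /P mq0 dq0 q0t !eqxx.
case: (arg_maxnP (fun q : {ffun T -> T} => #|[set y | p y == q y]|) Pq0).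
move=> q /and3P [mq /eqP dq /eqP qt] qmax.
have qu : q u != u by apply/eqP => qu; exact: min_comatching_maximal mq dq uV tV nut qu qt.
have qv : q v != v by apply/eqP => qv; exact: IH q t mq dq tV qt qv tv ps ls.
have {}qmax q' : comatching V q' -> defect V q' = min_defect V -> q' t = t ->
    #|[set y | p y == q' y]| <= #|[set y | p y == q y]|.
  by move=> mq' dq' q't; apply: qmax; rewrite /P mq' dq' q't !eqxx.
have vV : v \in V by rewrite -ls; exact: compl_path_last tV ps.
have cu := min_comatching_alt_connect mp dp mq dq qt qmax pu qu.
have cv := min_comatching_alt_connect mp dp mq dq qt qmax pv qv.
have rsym := alt_rel_sym (comatchingK mp) (comatchingK mq).
have cuv : connect (alt_rel p q) u v by rewrite (connect_trans cu) // (sym_connect_sym rsym) cv.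
(* [u], [v] and [t] are three distinct ends of the alternating component of [t]. *)
have [z ends] := alt_component_ends (comatchingK mp) (comatchingK mq) pu qu.
case: (ends v cuv); [by rewrite pv eqxx | by move=> vu; rewrite vu eqxx in uv|].
case: (ends t cu); [by rewrite qt eqxx orbT | by move=> tu; rewrite -tu qt eqxx in qu|].
by move=> tz vz; rewrite tz -vz eqxx in tv.
Qed.

Lemma gallai_min_defect :
  (forall u v, u \in V -> v \in V -> connect (compl_rel V) u v) -> min_defect V <= 1.
Proof.
move=> conn; rewrite leqNgt; apply/negP => hd.
have [p mp dp] := min_defect_attained V.
have : 1 < #|[set x in V | p x == x]| by rewrite -/(defect V p) dp.
case/card_gt1P => u [v []]; rewrite !inE => /andP [uV /eqP pu] /andP [vV /eqP pv] uv.
have /connectP [s ps ls] := conn u v uV vV.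
exact: (min_comatching_unmatched_path mp dp uV pu pv uv ps (esym ls)).
Qed.

End Gallai.

(** * Graphs without three pairwise non-adjacent vertices *)

Definition alpha_le2 (V : {set T}) :=
  [forall I : {set T}, (I \subset V) && indep I ==> (#|I| <= 2)].

Lemma alpha_le2S (V W : {set T}) : W \subset V -> alpha_le2 V -> alpha_le2 W.
Proof.
move=> sWV /forallP a2; apply/forallP => I; apply/implyP => /andP [sIW iI].
by apply: (implyP (a2 I)); rewrite (subset_trans sIW sWV) iI.
Qed.

Lemma alpha_le2P (V : {set T}) x y z : alpha_le2 V -> x \in V -> y \in V -> z \in V ->
  nonadj x y -> nonadj y z -> nonadj x z -> False.
Proof.
move=> /forallP /(_ [set x; y; z]) /implyP a2 xV yV zV.
move=> /andP [nxy exy] /andP [nyz eyz] /andP [nxz exz].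
have : 2 < #|[set x; y; z]|.
  apply/card_gt2P; exists x, y, z; rewrite !inE !eqxx ?orbT; split=> //.
  by rewrite nxy nyz eq_sym nxz.
rewrite ltnNge a2 // !subUset !sub1set xV yV zV /=.
apply/forall_inP => a ha; apply/forall_inP => b hb.
move: ha hb; rewrite !inE => /orP [/orP [/eqP ->|/eqP ->]|/eqP ->];
  by move=> /orP [/orP [/eqP ->|/eqP ->]|/eqP ->]; rewrite ?e_irr // e_sym.
Qed.

Lemma defect_colour_bound (V : {set T}) p (f : T -> nat) k : comatching V p ->
  (forall x, x \in V -> f x < k) ->
  (forall x y, x \in V -> y \in V -> y != x -> f y = f x -> p x = y) ->
  #|V| + defect V p <= 2 * k.
Proof.
move=> mp fk pf; have [R [sRV cR _ uni]] := comatching_transversal mp.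
rewrite -cR leq_mul2l /= cardE -(size_map f) -[k](size_iota 0); apply: uniq_leq_size.
  rewrite map_inj_in_uniq ?enum_uniq // => x y; rewrite !mem_enum => xR yR fxy.
  apply/eqP/negP => nxy; have yx : y != x by rewrite eq_sym; apply/negP.
  have pxy := pf x y (subsetP sRV _ xR) (subsetP sRV _ yR) yx (esym fxy).
  by have := uni x xR; rewrite pxy => /(_ yR) yE; rewrite yE eqxx in yx.
move=> c /mapP [x xR ->]; rewrite mem_iota add0n /=; apply: fk.
by rewrite mem_enum in xR; exact: subsetP sRV _ xR.
Qed.

(* With no three pairwise non-adjacent vertices, every colour class has at most
   two vertices, and pairing them gives a comatching. *)
Lemma comatching_of_colouring (V : {set T}) k : alpha_le2 V -> ncolorable V k ->
  exists2 p, comatching V p & #|V| + defect V p <= 2 * k.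
Proof.
move=> a2 [f [fk fp]].
have samec x y : x \in V -> y \in V -> f x = f y -> x != y -> nonadj x y.
  by move=> xV yV fxy nxy; rewrite /nonadj nxy /=; apply/negP => exy; exact: fp x y xV yV exy fxy.
have class2 x y z : x \in V -> y \in V -> z \in V -> y != x -> z != x ->
    f y = f x -> f z = f x -> y = z.
  move=> xV yV zV yx zx fy fz; apply/eqP; apply: contraT => yz; exfalso.
  apply: (alpha_le2P a2 xV yV zV); apply: samec; rewrite ?fy ?fz // eq_sym //.
pose p := [ffun x => if x \in V then
  (if [pick y in V | (y != x) && (f y == f x)] is Some y then y else x) else x].
have pE x y : x \in V -> y \in V -> y != x -> f y = f x -> p x = y.
  move=> xV yV yx fy; rewrite ffunE xV; case: pickP => [z /andP [zV /andP [zx /eqP fz]]|].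
    exact: class2 xV zV yV zx yx fz fy.
  by move/(_ y); rewrite yV yx fy eqxx.
have pF x : x \in V -> p x != x -> [/\ p x \in V, p x != x & f (p x) = f x].
  move=> xV; rewrite ffunE xV; case: pickP => [z /andP [zV /andP [zx /eqP fz]] _ //|_].
  by rewrite eqxx.
suff mp : comatching V p by exists p => //; exact: defect_colour_bound mp fk pE.
apply/and3P; split; apply/forallP => x.
- case: (boolP (x \in V)) => xV; last by rewrite !ffunE (negbTE xV) ?(negbTE xV).
  case: (boolP (p x == x)) => [/eqP -> //|px].
  have [pxV pxx fpx] := pF x xV px.
  by rewrite (pE (p x) x pxV xV) // eq_sym.
- by apply/implyP => xV; rewrite ffunE (negbTE xV).
- apply/implyP => px; case: (boolP (x \in V)) => xV; last by rewrite ffunE (negbTE xV) eqxx in px.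
  have [pxV pxx fpx] := pF x xV px.
  by rewrite nonadj_sym; apply: samec; rewrite // eq_sym.
Qed.

Definition join_free (V : {set T}) :=
  forall A : {set T}, A \subset V -> A != set0 -> A != V -> ~~ complete_to A (V :\: A).

Definition vertex_critical (V : {set T}) := forall v, v \in V -> chrom (V :\ v) < chrom V.

Lemma compl_connect (V : {set T}) : join_free V ->
  forall u w, u \in V -> w \in V -> connect (compl_rel V) u w.
Proof.
move=> cut u w uV wV; pose A := [set y in V | connect (compl_rel V) u y].
have sA : A \subset V by apply/subsetP => y; rewrite inE => /andP [].
case: (A =P V) => [AV|/eqP nAV]; first by move: wV; rewrite -{1}AV inE => /andP [].
have nA : A != set0 by apply/set0Pn; exists u; rewrite inE uV connect0.
have /forallPn [x] := cut A sA nA nAV; rewrite negb_imply => /andP [xA].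
case/forallPn => y; rewrite negb_imply => /andP [/setDP [yV yA] nexy].
move: (xA); rewrite inE => /andP [xV cux]; exfalso.
have xy : x != y by apply: contraNneq yA => <-.
move: yA; rewrite inE yV /= => /negP; apply; apply: connect_trans cux (connect1 _).
by rewrite /= xV yV /nonadj xy.
Qed.

(* An optimal colouring of [V :\ v] yields a comatching of [V] missing [v]; by
   criticality it is minimum. *)
Lemma critical_missed (V : {set T}) : alpha_le2 V -> vertex_critical V ->
  forall v, v \in V -> exists2 p, comatching V p & defect V p = min_defect V /\ p v = v.
Proof.
move=> a2 crit v vV.
have a2' := alpha_le2S (subD1set V v) a2.
have [p mp hp] := comatching_of_colouring a2' (chrom_ncolorable (V :\ v)).
have pv : p v = v by rewrite (comatching_out mp) // !inE eqxx.
have mpV := comatchingS mp (subD1set V v).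
exists p => //; split => //; apply/eqP; rewrite eqn_leq min_defect_le // andbT.
have dV : defect V p = (defect (V :\ v) p).+1.
  rewrite /defect (cardsD1 v [set x in V | p x == x]) !inE vV pv eqxx add1n.
  by congr (_.+1); apply: eq_card => x; rewrite !inE andbA.
have [q mq <-] := min_defect_attained V.
have := chrom_comatching mq; have := crit v vV.
have : #|V| = (#|V :\ v|).+1 by rewrite (cardsD1 v V) vV.
move: hp; rewrite dV; lia.
Qed.

Lemma chrom_critical_alpha_le2 (V : {set T}) :
  alpha_le2 V -> vertex_critical V -> join_free V -> 2 * chrom V <= #|V| + 1.
Proof.
move=> a2 crit cut; have [p mp dp] := min_defect_attained V.
apply: leq_trans (chrom_comatching mp) _; rewrite leq_add2l dp.
exact: gallai_min_defect (critical_missed a2 crit) (compl_connect cut).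
Qed.

(* The non-neighbours of a vertex of maximum degree form a clique. *)
Lemma card_le_max_deg_clique_num (V : {set T}) : alpha_le2 V -> V != set0 ->
  #|V| <= max_deg V + clique_num V + 1.
Proof.
move=> a2 nV; have [x xV dx] := max_deg_attained nV.
pose Q := [set y in V | (y != x) && ~~ e x y].
have cQ : is_clique e Q.
  apply/forall_inP => a aQ; apply/forall_inP => b bQ.
  apply/implyP => ab; apply: contraT => eab; exfalso.
  move: aQ bQ; rewrite !inE => /and3P [aV ax exa] /and3P [bV bx exb].
  by apply: (alpha_le2P a2 xV aV bV); rewrite /nonadj ?exa ?eab ?exb ?ab ?andbT // eq_sym ?ax ?bx.
have hQ : #|Q| <= clique_num V.
  by apply: leq_clique_num cQ; apply/subsetP => y; rewrite inE => /andP [].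
have leU (X Y : {set T}) : #|X :|: Y| <= #|X| + #|Y| by rewrite cardsU leq_subr.
have cover : #|V| <= #|[set x] :|: [set y in V | e x y] :|: Q|.
  apply: subset_leq_card; apply/subsetP => y yV; rewrite !inE yV /=.
  by case: (y =P x) => //= _; case: (e x y).
have := leU ([set x] :|: [set y in V | e x y]) Q; have := leU [set x] [set y in V | e x y].
rewrite cards1; lia.
Qed.

Definition chrom_bounded (V : {set T}) :=
  4 * chrom V <= 2 * clique_num V + max_deg V + 1 + #|V|.

Section ChromBoundCases.
Variable V : {set T}.
Hypothesis IH : forall W : {set T}, #|W| < #|V| -> chrom_bounded W.

Lemma chrom_bounded_edgeless : V != set0 ->
  (forall x y, x \in V -> y \in V -> ~~ e x y) -> chrom_bounded V.
Proof.
move=> /set0Pn [x xV] noedge; rewrite /chrom_bounded.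
have c1 : chrom V <= 1.
  apply: chrom_min; exists (fun _ => 0); split => // y z yV zV eyz.
  by have := noedge y z yV zV; rewrite eyz.
have := clique_num_gt0 xV; have : 0 < #|V| by apply/card_gt0P; exists x.
lia.
Qed.

Lemma chrom_bounded_noncritical v : v \in V -> chrom V <= chrom (V :\ v) -> chrom_bounded V.
Proof.
move=> vV hv; have sW := subD1set V v.
have cV : #|V| = (#|V :\ v|).+1 by rewrite (cardsD1 v V) vV.
have := @IH (V :\ v) ltac:(by rewrite cV); have := clique_numS sW; have := max_degS sW.
rewrite /chrom_bounded; lia.
Qed.

Lemma chrom_bounded_indep (I : {set T}) : I \subset V -> indep I -> 2 < #|I| -> chrom_bounded V.
Proof.
move=> sIV iI cI; have [J [sIJ sJV iJ dom]] := maximal_indep_ext iI sIV.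
have cJ := leq_trans cI (subset_leq_card sIJ).
have cV : #|J| + #|V :\: J| = #|V| by rewrite -(cardsID J V) (setIidPr sJV).
case: (V :\: J =P set0) => [W0|/eqP nW].
  have := chrom_setD_indep V iJ; rewrite W0 {2}/chrom eqxx.
  have [x xJ] : exists x, x \in J by apply/card_gt0P; lia.
  by have := clique_num_gt0 (subsetP sJV _ xJ); rewrite /chrom_bounded; lia.
have := @IH (V :\: J) ltac:(lia); have := chrom_setD_indep V iJ.
have := max_deg_setD_dominating sJV dom nW; have := clique_numS (subsetDl V J).
rewrite /chrom_bounded; lia.
Qed.

Lemma chrom_bounded_join (A : {set T}) : A \subset V -> A != set0 -> A != V ->
  complete_to A (V :\: A) -> chrom_bounded V.
Proof.
move=> sAV nA nAV join.
have nB : V :\: A != set0.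
  by apply: contraNneq nAV => /eqP; rewrite setD_eq0 => sVA; rewrite eqEsubset sAV sVA.
have cV : #|A| + #|V :\: A| = #|V| by rewrite -(cardsID A V) (setIidPr sAV).
have cA : 0 < #|A| by rewrite card_gt0.
have cB : 0 < #|V :\: A| by rewrite card_gt0.
have := @IH A ltac:(lia); have := @IH (V :\: A) ltac:(lia).
have := chrom_setID V A; rewrite (setIidPr sAV).
have := clique_num_join sAV join; have := max_deg_join sAV nA join.
have := max_deg_lt_card nB; rewrite /chrom_bounded; lia.
Qed.

End ChromBoundCases.

(* The remaining case, where Gallai's lemma does the work. *)
Lemma chrom_bounded_core (V : {set T}) x y : x \in V -> y \in V -> e x y ->
  alpha_le2 V -> vertex_critical V -> join_free V -> chrom_bounded V.
Proof.
move=> xV yV exy a2 crit cut.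
have := chrom_critical_alpha_le2 a2 crit cut; have := clique_num_edge xV yV exy.
have nV : V != set0 by apply/set0Pn; exists x.
have := card_le_max_deg_clique_num a2 nV.
rewrite /chrom_bounded; lia.
Qed.

Lemma chrom_bounded_all (V : {set T}) : chrom_bounded V.
Proof.
move: {2}#|V| (leqnn #|V|) => n; elim: n V => [|n IHn] V hV.
  by move: hV; rewrite leqn0 cards_eq0 => /eqP ->; rewrite /chrom_bounded /chrom eqxx.
have IH (W : {set T}) : #|W| < #|V| -> chrom_bounded W by move=> hW; apply: IHn; lia.
case: (V =P set0) => [->|/eqP nV]; first by rewrite /chrom_bounded /chrom eqxx.
case: (boolP [exists x in V, exists y in V, e x y]) => [|noedge]; last first.
  apply: chrom_bounded_edgeless => // x y xV yV; apply: contra noedge => exy.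
  by apply/exists_inP; exists x => //; apply/exists_inP; exists y.
case/exists_inP => x xV /exists_inP [y yV exy].
case: (boolP [exists v in V, chrom V <= chrom (V :\ v)]).
  by case/exists_inP => v vV hv; exact: (chrom_bounded_noncritical IH vV hv).
move=> /exists_inPn crit.
case: (boolP (alpha_le2 V)) => [a2|/forallPn [I]]; last first.
  rewrite negb_imply -ltnNge => /andP [/andP [sIV iI] cI].
  exact: (chrom_bounded_indep IH sIV iI cI).
case: (boolP [exists A : {set T}, [&& A \subset V, A != set0, A != V & complete_to A (V :\: A)]]).
  by case/existsP => A /and4P [sAV nA nAV join]; exact: (chrom_bounded_join IH sAV nA nAV join).
move=> /existsPn cut; apply: chrom_bounded_core xV yV exy a2 _ _ => [v vV|A sAV nA nAV].
  by rewrite ltnNge crit.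
by have := cut A; rewrite sAV nA nAV.
Qed.

(* A colour class of an optimal colouring of [H], extended to a maximal
   independent set of [G]. *)
Lemma colour_class_extension (G H : {set T}) : H \subset G -> H != set0 ->
  exists J : {set T}, [/\ J \subset G, indep J, H :&: J != set0,
    forall x, x \in G :\: J -> exists2 y, y \in J & e x y &
    chrom (H :\: J) < chrom H].
Proof.
move=> sHG /set0Pn [x0 x0H]; have [f [fk fp]] := chrom_ncolorable H.
pose C := [set x in H | f x == f x0].
have iC : indep C.
  apply/forall_inP => a /setIdP [aH /eqP fa]; apply/forall_inP => b /setIdP [bH /eqP fb].
  by apply/negP => eab; apply: (fp a b aH bH eab); rewrite fa fb.
have sCG : C \subset G by apply/subsetP => x; rewrite inE => /andP [/(subsetP sHG)].
have [J [sCJ sJG iJ dom]] := maximal_indep_ext iC sCG.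
have x0J : x0 \in J by apply: (subsetP sCJ); rewrite inE x0H eqxx.
exists J; split => //; first by apply/set0Pn; exists x0; rewrite inE x0H.
have k1 : 0 < chrom H by apply: leq_ltn_trans (fk x0 x0H).
apply: leq_ltn_trans (chromS (setDS H sCJ)) _.
rewrite -(prednK k1) ltnS; apply: chrom_min.
have fC x : x \in H :\: C -> x \in H /\ f x != f x0.
  by case/setDP => xH; rewrite inE xH.
exists (fun x => unbump (f x0) (f x)); split => [x /fC [xH fx]|x y /fC [xH fx] /fC [yH fy] exy].
  exact: unbump_lt (fk x0 x0H) (fk x xH) fx.
move=> fxy; apply: (fp x y xH yH exy); apply: (can_in_inj (@unbumpK (f x0))) fxy; by rewrite inE.
Qed.

Lemma chrom_bounded_sub (G H : {set T}) : H \subset G ->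
  4 * chrom G + #|H| <= 2 * clique_num G + max_deg G + 1 + #|G| + 3 * chrom H.
Proof.
move: {2}#|G| (leqnn #|G|) => n; elim: n G H => [|n IHn] G H hG sHG.
  have G0 : G = set0 by apply/eqP; rewrite -cards_eq0; lia.
  have H0 : H = set0 by apply/eqP; rewrite -subset0 -G0.
  by rewrite G0 H0 /chrom eqxx cards0.
case: (H =P set0) => [->|/eqP nH].
  by have := chrom_bounded_all G; rewrite cards0 {2}/chrom eqxx /chrom_bounded; lia.
have [J [sJG iJ nHJ dom cH]] := colour_class_extension sHG nH.
have cG : #|J| + #|G :\: J| = #|G| by rewrite -(cardsID J G) (setIidPr sJG).
have cHJ : #|H :&: J| + #|H :\: J| = #|H| by rewrite cardsID.
have cHJJ : #|H :&: J| <= #|J| := subset_leq_card (subsetIr H J).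
have cHJ0 : 0 < #|H :&: J| by rewrite card_gt0.
have cHG : #|H| <= #|G| := subset_leq_card sHG.
have chiG := chrom_setD_indep G iJ.
case: (G :\: J =P set0) => [G0|/eqP nG'].
  move: chiG; rewrite G0 {2}/chrom eqxx; case/set0Pn: nH => x xH.
  by have := clique_num_gt0 (subsetP sHG _ xH); lia.
have := IHn (G :\: J) (H :\: J) ltac:(lia) (setSD J sHG).
have := max_deg_setD_dominating sJG dom nG'; have := clique_numS (subsetDl G J).
lia.
Qed.

End Graph.

Import GRing.Theory Num.Theory.
Local Open Scope ring_scope.

Theorem proposition3 (T : finType) (e : rel T)
  (e_sym : symmetric e) (e_irr : irreflexive e)
  (S : {set T}) (S_ne : S != set0) :
  ((chi e [set: T])%:R : rat) <=
    (1 / 2) * ((omega e)%:R + ((Delta e)%:R + 1 + (#|T|)%:R) / 2)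
    + (3 * (chi e S)%:R - (#|S|)%:R) / 4.
Proof.
have nT : [set: T] != set0 by apply: contraNneq S_ne => T0; rewrite -subset0 -T0 subsetT.
have chromT : chrom e [set: T] = chi e [set: T] by rewrite /chrom (negbTE nT).
have chromS : chrom e S = chi e S by rewrite /chrom (negbTE S_ne).
have cliqueT : clique_num e [set: T] = omega e by apply: eq_bigl => A; rewrite subsetT.
have degT : max_deg e [set: T] = Delta e.
  by apply: eq_big => [x|x _]; [rewrite inE | apply: eq_card => y; rewrite !inE].
have := chrom_bounded_sub e_sym e_irr (subsetT S).
rewrite chromT chromS cliqueT degT cardsT -(ler_nat rat).
lra.
Qed.
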